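(* Let $H=(T_1,\dots,T_n,p_1,\dots,p_n)$ be a strategic game equipped with mixed strategies as described in the context. (i) If $\mathbf{MD}(\beta)$ holds for all $\beta<\alpha$, then $\overline{MGS}^{\alpha}=\overline{MLS}^{\alpha}$. In particular, if $\mathbf{MD}(\alpha)$ holds for all ordinals $\alpha$, then the outcomes of $\overline{MGS}$ and $\overline{MLS}$ coincide. (ii) If $\mathbf{MD}(\alpha)$ holds for all ordinals $\alpha$, then $\overline{MLS}$ is order independent. (iii) If $\mathbf{MD}(\beta)$ holds for all $\beta<\alpha+1$, then $MLS^{\alpha}=\overline{MLS}^{\alpha}$. In particular, if $\mathbf{MD}(\alpha)$ holds for all ordinals $\alpha$, then the outcome of $MLS$ exists and equals the outcome of $\overline{MLS}$.
   Context: A restriction of $H$ is $G=(S_1,\dots,S_n)$ with $S_i\subseteq T_i$ (possibly empty), ordered componentwise. Mixed strategies: for each $i$ a set $\Delta T_i\supseteq T_i$ of mixed strategies is given, and for each $S_i\subseteq T_i$ a set $\Delta S_i\subseteq\Delta T_i$ of mixed strategies over $S_i$; each $p_i$ is extended to $p_i:\Delta T_1\times\dots\times\Delta T_n\to\mathbb R$. For $m_i\in\Delta T_i$ and $s_i\in T_i$, $m_i\succ_G s_i$ means $p_i(m_i,s_{-i})>p_i(s_i,s_{-i})$ for all $s_{-i}\in\prod_{j\ne i}S_j$ (vacuous if empty). $MGS(G):=(S_1',\dots,S_n')$ with $S_i':=\{s_i\in T_i\mid\neg\exists m_i\in\Delta T_i:\ m_i\succ_G s_i\}$; $MLS(G):=(S_1',\dots,S_n')$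 with $S_i':=\{s_i\in T_i\mid\neg\exists m_i\in\Delta S_i:\ m_i\succ_G s_i\}$; $\overline{T}(G):=T(G)\cap G$. Iterations: $T^0:=H$, $T^{\alpha+1}:=T(T^\alpha)$, $T^\beta:=\bigcap_{\alpha<\beta}T^\alpha$ for limit $\beta$; outcome $T^{\alpha_T}$, $\alpha_T$ the least $\alpha$ with $T^{\alpha+1}=T^\alpha$. $R$ is a relaxation of $T$ if for all ordinals $\alpha$: (1) $T(R^\alpha)\subseteq R(R^\alpha)$; (2) if $T(R^\alpha)\subseteq R^\alpha$ then $R(R^\alpha)\subseteq R^\alpha$; (3) if $R(R^\alpha)=R^\alpha$ then $T(R^\alpha)=R^\alpha$. $T$ is order independent if the set of outcomes of relaxations of $T$ has at most one element. Property $\mathbf{MD}(\alpha)$: for every relaxation $R$ of $\overline{MLS}$, writing $R^\alpha=(S_1,\dots,S_n)$, every $i$ and every $s_i\in T_i$: if some $m_i\in\Delta T_i$ has $m_i\succ_{R^\alpha}s_i$, then some $m_i^*\in\Delta S_i$ has $m_i^*\succ_{R^\alpha}s_i$. *)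

From mathcomp Require Import all_boot all_order all_algebra.
From mathcomp Require Import boolp classical_sets reals.

Unset Printing Implicit Defensive.

Import Order.TTheory GRing.Theory Num.Theory.
Local Open Scope classical_set_scope.
Local Open Scope ring_scope.

(** An ordinal alpha is represented by an element [a] of a well-ordered type [O];
    everything below at index [a] depends only on the initial segment of [O]
    below [a], i.e. only on the order type alpha.  "For all ordinals alpha" is
    rendered as "for all well-ordered types O and all a : O". *)
Record wordType := WOrd {
  wo_car :> Type;
  wo_lt : wo_car -> wo_car -> Prop;
  wo_wf : well_founded wo_lt;
  wo_trans : forall x y z, wo_lt x y -> wo_lt y z -> wo_lt x z;
  wo_total : forall x y, wo_lt x y \/ x = y \/ wo_lt y x }.

Arguments wo_lt {w}.

Definition is_pred {O : wordType} (b a : O) :=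
  wo_lt b a /\ ~ (exists c, wo_lt b c /\ wo_lt c a).

Section Game.
(** A strategic game H = (T_1,...,T_n, p_1,...,p_n) with mixed strategies:
    [M i] is the set Delta T_i of mixed strategies of player i,
    [T i] the set T_i of pure strategies (a subset of Delta T_i),
    [p i] the payoff of player i on Delta T_1 x ... x Delta T_n,
    [Delta i S] the set Delta S_i of mixed strategies over S_i (for S_i a subset of T_i). *)
Variables (n : nat) (M : 'I_n -> Type) (T : forall i, set (M i)).
Variables (R : realType) (p : forall i : 'I_n, (forall j, M j) -> R).
Variable (Delta : forall i, set (M i) -> set (M i)).

(** Families of sets; a restriction of H is such a family with G i `<=` T i. *)
Definition restr := forall i : 'I_n, set (M i).

Definition rsub (G G' : restr) := forall i, G i `<=` G' i.

Definition upd (s : forall j, M j) (i : 'I_n) (x : M i) : forall j, M j :=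
  fun j => match i =P j with
           | ReflectT e => eq_rect i M x j e
           | ReflectF _ => s j
           end.

Definition dominates (G : restr) (i : 'I_n) (m si : M i) :=
  forall s : forall j, M j, (forall j, j != i -> G j (s j)) ->
    p i (upd s i si) < p i (upd s i m).

Definition MGS (G : restr) : restr :=
  fun i => [set si | T i si /\ ~ (exists m : M i, dominates G i m si)].

Definition MLS (G : restr) : restr :=
  fun i => [set si | T i si /\ ~ (exists m : M i, Delta i (G i) m /\ dominates G i m si)].

Definition barop (F : restr -> restr) : restr -> restr :=
  fun G i => F G i `&` G i.

(** Transfinite iteration: F^0 = H, F^(b+1) = F(F^b),
    F^a = cap_{b<a} F^b for limit a (written as H cap cap_{b<a} F^b,
    which covers both the zero and the limit case). *)
Definition iter_body {O : wordType} (F : restr -> restr)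
  (a : O) (rec : forall b : O, wo_lt b a -> restr) : restr :=
  match pselect (exists b, is_pred b a) with
  | left h => let bb := cid h in F (rec (sval bb) (proj1 (svalP bb)))
  | right _ => fun i => [set x | T i x /\ forall b (hb : wo_lt b a), rec b hb i x]
  end.

Definition giter {O : wordType} (F : restr -> restr) : O -> restr :=
  Fix (@wo_wf O) (fun _ => restr) (@iter_body O F).

Definition relaxation (Rop F : restr -> restr) :=
  forall (O : wordType) (a : O),
    let G := giter Rop a in
    [/\ rsub (F G) (Rop G),
        rsub (F G) G -> rsub (Rop G) G
      & Rop G = G -> F G = G].

Definition is_outcome (F : restr -> restr) (G : restr) :=
  exists (O : wordType) (a : O),
    [/\ F (giter F a) = giter F a,
        forall b, wo_lt b a -> F (giter F b) <> giter F b
      & G = giter F a].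

Definition order_independent (F : restr -> restr) :=
  forall R1 R2 G1 G2, relaxation R1 F -> relaxation R2 F ->
    is_outcome R1 G1 -> is_outcome R2 G2 -> G1 = G2.

Definition MD {O : wordType} (a : O) :=
  forall Rop, relaxation Rop (barop MLS) ->
    let S := giter Rop a in
    forall i (si : M i), T i si ->
      (exists m : M i, dominates S i m si) ->
      exists m : M i, Delta i (S i) m /\ dominates S i m si.

End Game.

Arguments rsub {n M}.
Arguments upd {n M}.
Arguments dominates {n M R}.
Arguments MGS {n M} T {R}.
Arguments MLS {n M} T {R}.
Arguments barop {n M}.
Arguments iter_body {n M} T {O}.
Arguments giter {n M} T {O}.
Arguments relaxation {n M} T.
Arguments is_outcome {n M} T.
Arguments order_independent {n M} T.
Arguments MD {n M} T {R} p Delta {O}.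

From mathcomp Require Import all_boot all_order all_algebra.
From mathcomp Require Import boolp classical_sets reals wochoice.

(* Under MD, a strategy that is dominated at all on the current restriction is
   already dominated by a mixed strategy over that restriction, so MGS, MLS and
   their intersections with the current restriction coincide on the iterates of
   MLS-bar; hence the three iterations agree stage by stage (i, iii).  For (ii),
   the outcome G of any relaxation of MLS-bar is a fixed point of MLS-bar at which
   dominance is local, so no strategy of G is ever dominated and G survives every
   stage of the MGS-bar iteration; conversely the MGS-bar outcome survives every
   stage of the relaxation, by its first axiom.  So all these outcomes equal the
   MGS-bar outcome.  Outcomes exist because an operator that only removes
   strategies must stop within the (Hartogs-many) stages of a well-order on the
   powerset of all strategies. *)

Unset Printing Implicit Defensive.
Local Open Scope classical_set_scope.

Lemma well_founded_min {A : Type} {lt : A -> A -> Prop} (P : A -> Prop) {x : A} :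
  well_founded lt -> P x -> exists y, P y /\ forall z, lt z y -> ~ P z.
Proof.
move=> wf Px; apply: contrapT => nomin.
suff : forall y, ~ P y by move/(_ x).
move=> y; elim: (wf y) => {}y _ IH Py; apply: nomin; exists y; split => // z /IH.
Qed.

Section Iteration.
Context {n : nat} {M : 'I_n -> Type} (T : forall i, set (M i)).
Local Notation restr := (restr n M).
Implicit Types (F : restr -> restr) (G : restr).

Lemma restr_ext G1 G2 : (forall i x, G1 i x <-> G2 i x) -> G1 = G2.
Proof.
move=> h; apply: functional_extensionality_dep => i.
apply: functional_extensionality_dep => x; exact: propext.
Qed.

Lemma rsub_anti G1 G2 : rsub G1 G2 -> rsub G2 G1 -> G1 = G2.
Proof. by move=> h12 h21; apply: restr_ext => i x; split => [/h12|/h21]. Qed.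

Lemma is_pred_uniq {O : wordType} {b b' a : O} : is_pred b a -> is_pred b' a -> b = b'.
Proof.
move=> [ba hb] [b'a hb']; case: (wo_total _ b b') => [lt|[//|lt]].
- by case: hb; exists b'.
- by case: hb'; exists b.
Qed.

Lemma giterE {O : wordType} F (a : O) :
  giter T F a = iter_body T F a (fun b _ => giter T F b).
Proof.
rewrite /giter Fix_eq // => x f g fg; congr iter_body.
by apply: functional_extensionality_dep => y; apply: functional_extensionality_dep.
Qed.

Lemma giter_succ {O : wordType} F {a b : O} :
  is_pred b a -> giter T F a = F (giter T F b).
Proof.
move=> hb; rewrite giterE /iter_body; case: pselect => [h|[]]; last by exists b.
by rewrite /= (is_pred_uniq (svalP (cid h)) hb).
Qed.

Lemma giter_lim {O : wordType} F {a : O} : ~ (exists b, is_pred b a) ->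
  giter T F a = fun i => [set x | T i x /\ forall b, wo_lt b a -> giter T F b i x].
Proof. by move=> hb; rewrite giterE /iter_body; case: pselect. Qed.

Lemma giter_congr {O : wordType} F F' (a : O) :
  (forall b, wo_lt b a -> F (giter T F' b) = F' (giter T F' b)) ->
  giter T F a = giter T F' a.
Proof.
elim/(well_founded_induction (@wo_wf O)): a => a IH agree.
have agree_lt b : wo_lt b a -> giter T F b = giter T F' b.
  by move=> ba; apply: IH => // c cb; apply: agree; apply: wo_trans cb ba.
case: (pselect (exists b, is_pred b a)) => [[b hb]|hb].
  by rewrite !(giter_succ _ hb) agree_lt ?agree //; case: hb.
rewrite !(giter_lim _ hb); apply: restr_ext => i x.
by split=> -[Tx h]; split=> // b ba; [rewrite -agree_lt|rewrite agree_lt] => //; apply: h.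
Qed.

Lemma sub_giter {O : wordType} F G : rsub G T ->
  (forall c : O, rsub G (giter T F c) -> rsub G (F (giter T F c))) ->
  forall a : O, rsub G (giter T F a).
Proof.
move=> GT step; elim/(well_founded_induction (@wo_wf O)) => a IH.
case: (pselect (exists b, is_pred b a)) => [[b hb]|hb].
  by rewrite (giter_succ _ hb); apply/step/IH; case: hb.
by rewrite (giter_lim _ hb) => i x Gx; split=> [|b ba]; [apply: GT|apply: IH].
Qed.

(* The first stage missing [x] cannot be a limit stage, so it is a successor. *)
Lemma giter_removed {O : wordType} {F} {a : O} {i} {x : M i} :
  T i x -> ~ giter T F a i x ->
  exists2 b, wo_lt b a & giter T F b i x /\ ~ F (giter T F b) i x.
Proof.
move=> Tx xa.
have [c [xc cmin]] := well_founded_min (fun c => ~ giter T F c i x) (@wo_wf O) xa.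
have ca : wo_lt c a \/ c = a.
  by case: (wo_total _ c a) => [|[|/cmin]]; [left|right|].
case: (pselect (exists b, is_pred b c)) => [[b hb]|hb]; last first.
  by case: xc; rewrite (giter_lim _ hb); split=> // b /cmin /contrapT.
exists b; first by case: ca => [|<-]; [apply: wo_trans hb.1|case: hb].
by split; [exact: contrapT (cmin _ hb.1)|rewrite -(giter_succ _ hb)].
Qed.

Lemma barop_sub F G : rsub (barop F G) G.
Proof. by move=> i x []. Qed.

Section Deflationary.
Context {O : wordType} {F : restr -> restr}.
Hypothesis F_defl : forall G, rsub (F G) G.

Lemma giter_sub_succ {a b : O} : wo_lt b a -> rsub (giter T F a) (F (giter T F b)).
Proof.
elim/(well_founded_induction (@wo_wf O)): a b => a IH b ba.
case: (pselect (exists c, is_pred c a)) => [[c hc]|hc].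
  rewrite (giter_succ _ hc); case: (wo_total _ b c) => [bc|[-> i x //|cb]].
    by move=> i x /F_defl; apply: (IH c hc.1 b bc).
  by case: hc => _ []; exists b.
have [c [bc ca]] : exists c, wo_lt b c /\ wo_lt c a.
  by apply: contrapT => nc; apply: hc; exists b.
by rewrite (giter_lim _ hc) => i x [_ /(_ c ca)]; apply: IH.
Qed.

Lemma giter_sub {a b : O} : wo_lt b a -> rsub (giter T F a) (giter T F b).
Proof. by move=> ba i x /(giter_sub_succ ba) /F_defl. Qed.

End Deflationary.

Lemma outcome_congr F F' G :
  (forall (O : wordType) (b : O), F (giter T F' b) = F' (giter T F' b)) ->
  is_outcome T F' G -> is_outcome T F G.
Proof.
move=> agree [O [a [fixa mina ->]]].
have eq_iter (c : O) : giter T F c = giter T F' c by apply: giter_congr.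
exists O, a; split; rewrite ?eq_iter ?agree //.
by move=> b ba; rewrite eq_iter agree; apply: mina.
Qed.

End Iteration.

Section WellOrderOf.
Variable Y : Type.

Let le : rel {classic Y} := sval (well_ordering_principle {classic Y}).
Let le_wo : well_order le := svalP (well_ordering_principle {classic Y}).

Let le_min {s : seq {classic Y}} {x} : x \in s ->
  exists z, z \in s /\ forall w, w \in s -> le z w.
Proof.
move=> xs; have [|z [[zs lb] _]] := le_wo (mem s); first by exists x.
by exists z; split => // w /lb.
Qed.

Let le_chain : wo_chain le predT := fun A _ => le_wo A.

Let le_anti {x y} : le x y -> le y x -> x = y.
Proof. by move=> xy yx; apply: (wo_chain_antisymmetric le_chain) => //; rewrite xy. Qed.

Let le_total x y : le x y \/ le y x.
Proof. by have /(_ x y isT isT) /orP[] := wo_chainW le_chain; [left|right]. Qed.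

Let le_trans x y z : le x y -> le y z -> le x z.
Proof.
move=> xy yz; have [m []] := le_min (mem_head x [:: y; z]).
rewrite !inE => /or3P[] /eqP -> lb; first by apply: lb; rewrite !inE eqxx !orbT.
  by rewrite (le_anti xy (lb x _)) // inE eqxx.
by rewrite -(le_anti yz (lb y _)) // !inE eqxx orbT.
Qed.

Definition wo_lt_of (x y : {classic Y}) := le x y /\ x <> y.

Lemma wo_lt_of_trans x y z : wo_lt_of x y -> wo_lt_of y z -> wo_lt_of x z.
Proof.
move=> [xy nxy] [yz nyz]; split; first exact: le_trans xy yz.
by move=> exz; subst z; apply: nyz; apply: le_anti.
Qed.

Lemma wo_lt_of_total x y : wo_lt_of x y \/ x = y \/ wo_lt_of y x.
Proof.
case: (pselect (x = y)) => [->|nxy]; first by right; left.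
by case: (le_total x y) => h; [left|right; right]; split=> // /esym.
Qed.

Lemma wo_lt_of_wf : well_founded wo_lt_of.
Proof.
move=> a; apply: contrapT => na.
have [|m [[mA lb] _]] := le_wo [pred z | ~~ `[< Acc wo_lt_of z >]].
  by exists a; rewrite inE; apply/negP => /asboolP.
move: mA; rewrite inE => /negP; apply; apply/asboolP; constructor => y [ym nym].
apply: contrapT => ny; apply: nym; apply: le_anti => //; apply: lb.
by rewrite inE; apply/negP => /asboolP.
Qed.

Definition wordType_of : wordType :=
  @WOrd {classic Y} wo_lt_of wo_lt_of_wf wo_lt_of_trans wo_lt_of_total.

End WellOrderOf.

Lemma Cantor_not_injective (X : Type) (f : set X -> X) : ~ injective f.
Proof.
move=> finj; set D := [set x | exists A, f A = x /\ ~ A x].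
have [DfD|nD] := pselect (D (f D)); last by apply: (nD); exists D.
by have [A [/finj eAD]] := DfD; rewrite eAD.
Qed.

Section OutcomeExists.
Context {n : nat} {M : 'I_n -> Type} (T : forall i, set (M i)).
Context {F : restr n M -> restr n M}.
Hypothesis F_defl : forall G, rsub (F G) G.

Let stages := wordType_of (set {i : 'I_n & M i}).

(* Otherwise each stage removes a fresh strategy, injecting the stages into the strategies. *)
Lemma giter_fix_exists : exists a : stages, F (giter T F a) = giter T F a.
Proof.
apply: contrapT => nofix.
have removed (a : stages) : exists y : {i : 'I_n & M i},
    giter T F a (projT1 y) (projT2 y) /\ ~ F (giter T F a) (projT1 y) (projT2 y).
  apply: contrapT => none; apply: nofix; exists a; apply: rsub_anti => // i x ax.
  by apply: contrapT => nFx; apply: none; exists (existT _ i x).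
have [f hf] := choice removed.
apply: (@Cantor_not_injective {i : 'I_n & M i} f) => a b eab.
have fresh (c d : stages) : wo_lt d c -> f c <> f d.
  move=> dc efcd; have [fc _] := hf c; have [_ nfd] := hf d.
  by apply: nfd; rewrite -efcd; apply: (giter_sub_succ T F_defl dc).
by case: (wo_total stages a b) => [/fresh /(_ (esym eab))|[//|/fresh /(_ eab)]].
Qed.

Lemma outcome_exists : exists G, is_outcome T F G.
Proof.
have [a0 fix0] := giter_fix_exists.
have [a [fixa mina]] :=
  well_founded_min (fun a => F (giter T F a) = giter T F a) (@wo_wf stages) fix0.
by exists (giter T F a), stages, a; split=> // b /mina.
Qed.

End OutcomeExists.

Section Dominance.
Context {n : nat} {M : 'I_n -> Type} (T : forall i, set (M i)).
Context {R : realType} (p : forall i : 'I_n, (forall j, M j) -> R).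
Context (Delta : forall i, set (M i) -> set (M i)).
Local Notation restr := (restr n M).
Local Notation MGS := (MGS T p).
Local Notation MLS := (MLS T p Delta).
Local Notation MLSb := (barop MLS).
Local Notation MGSb := (barop MGS).
Implicit Types G X : restr.

(* The conclusion of MD, for one restriction. *)
Definition local_dominance G := forall i (si : M i), T i si ->
  (exists m, dominates p G i m si) -> exists m, Delta i (G i) m /\ dominates p G i m si.

Lemma dominates_sub {G X i m si} : rsub G X -> dominates p X i m si -> dominates p G i m si.
Proof. by move=> GX hd s hs; apply: hd => j /hs /GX. Qed.

Lemma MGS_sub_MLS G : rsub (MGS G) (MLS G).
Proof. by move=> i x [Tx nd]; split=> // -[m [_ hm]]; apply: nd; exists m. Qed.

Lemma MGS_mono {G X} : rsub G X -> rsub (MGS G) (MGS X).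
Proof.
by move=> GX i x [Tx nd]; split=> // -[m /(dominates_sub GX) hm]; apply: nd; exists m.
Qed.

Lemma MGS_local G : local_dominance G -> MGS G = MLS G.
Proof.
move=> loc; apply: rsub_anti; first exact: MGS_sub_MLS.
by move=> i x [Tx nd]; split=> // /(loc _ _ Tx); apply: nd.
Qed.

Lemma relaxation_refl F : relaxation T F F.
Proof. by move=> O a; split=> // i x. Qed.

Lemma MD_MLSb_local {O : wordType} (a : O) :
  MD T p Delta a -> local_dominance (giter T MLSb a).
Proof. by move/(_ MLSb (relaxation_refl _)). Qed.

Lemma giter_MLSb_removed_dominated {O : wordType} {a : O} {i} {x : M i} :
  T i x -> ~ giter T MLSb a i x -> exists m, dominates p (giter T MLSb a) i m x.
Proof.
move=> Tx /(giter_removed T Tx) [b ba [xb nx]].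
have [m [_ hm]] :
    exists m, Delta i (giter T MLSb b i) m /\ dominates p (giter T MLSb b) i m x.
  by apply: contrapT => nd; apply: nx.
by exists m; apply: dominates_sub hm; apply: (giter_sub T (barop_sub MLS) ba).
Qed.

Lemma MLS_local_MLSb {O : wordType} (a : O) : local_dominance (giter T MLSb a) ->
  MLS (giter T MLSb a) = MLSb (giter T MLSb a).
Proof.
move=> loc; apply: rsub_anti; last by move=> i x [].
move=> i x MLSx; split=> //; apply: contrapT => /(giter_MLSb_removed_dominated MLSx.1).
by case: MLSx => Tx nd /(loc _ _ Tx).
Qed.

(* The outcome of a relaxation and a fixed point of MGS-bar each survive every
   stage of the other iteration. *)
Lemma relaxation_outcome_MGSb {Rop G Gs} : relaxation T Rop MLSb ->
  (forall (O : wordType) (a : O), MD T p Delta a) ->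
  is_outcome T Rop G -> is_outcome T MGSb Gs -> G = Gs.
Proof.
move=> relax MDall [O [a [fixa _ ->]]] [Os [a0 [fix0 _ ->]]].
have [_ _ /(_ fixa) MLSb_fix] := relax O a.
apply: rsub_anti.
- apply: sub_giter => [|c Gc]; first by rewrite -MLSb_fix => i x [[]].
  move=> i x Gx; split; last exact: Gc.
  rewrite -MLSb_fix in Gx; case: Gx => + _.
  by rewrite -MGS_local; [apply: MGS_mono|apply: MDall].
- apply: sub_giter => [|c Gsc]; first by rewrite -fix0 => i x [[]].
  have [sub_relax _ _] := relax O c.
  move=> i x Gsx; apply: sub_relax; split; last exact: Gsc.
  rewrite -fix0 in Gsx; case: Gsx => + _.
  by move/(MGS_mono Gsc); apply: MGS_sub_MLS.
Qed.

End Dominance.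

Theorem mainTheorem12 (n : nat) (M : 'I_n -> Type) (T : forall i, set (M i))
  (R : realType) (p : forall i : 'I_n, (forall j, M j) -> R)
  (Delta : forall i, set (M i) -> set (M i))
  (hDelta : forall i, Delta i (T i) = setT) :
  let MGSb := barop (MGS T p) in
  let MLSb := barop (MLS T p Delta) in
  let MDall := forall (O : wordType) (a : O), MD T p Delta a in
  [/\ (* (i) *)
      (forall (O : wordType) (a : O),
         (forall b, wo_lt b a -> MD T p Delta b) ->
         giter T MGSb a = giter T MLSb a),
      MDall -> exists G, is_outcome T MGSb G /\ is_outcome T MLSb G,
      (* (ii) *)
      MDall -> order_independent T MLSb,
      (* (iii) *)
      (forall (O : wordType) (a : O),
         (forall b, wo_lt b a \/ b = a -> MD T p Delta b) ->
         giter T (MLS T p Delta) a = giter T MLSb a)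
    & MDall -> exists G, is_outcome T (MLS T p Delta) G /\ is_outcome T MLSb G].
Proof.
move=> MGSb MLSb MDall.
have MGSb_MLSb (O : wordType) (b : O) :
    MD T p Delta b -> MGSb (giter T MLSb b) = MLSb (giter T MLSb b).
  by move/MD_MLSb_local/MGS_local; rewrite /MGSb /MLSb /barop => ->.
have MLS_MLSb (O : wordType) (b : O) :
    MD T p Delta b -> MLS T p Delta (giter T MLSb b) = MLSb (giter T MLSb b).
  by move/MD_MLSb_local/MLS_local_MLSb.
split.
- by move=> O a MDlt; apply: giter_congr => b /MDlt /MGSb_MLSb.
- move=> MDa; have [G oG] := outcome_exists T (barop_sub (MLS T p Delta)).
  by exists G; split=> //; apply: outcome_congr oG => O b; apply: MGSb_MLSb.
- move=> MDa R1 R2 G1 G2 relax1 relax2 o1 o2.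
  have [Gs oGs] := outcome_exists T (barop_sub (MGS T p)).
  by rewrite (relaxation_outcome_MGSb T p Delta relax1 MDa o1 oGs)
    (relaxation_outcome_MGSb T p Delta relax2 MDa o2 oGs).
- by move=> O a MDle; apply: giter_congr => b ba; apply/MLS_MLSb/MDle; left.
- move=> MDa; have [G oG] := outcome_exists T (barop_sub (MLS T p Delta)).
  by exists G; split=> //; apply: outcome_congr oG => O b; apply: MLS_MLSb.
Qed.
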